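(* Let $K$ be a graph with a designated set of edges called virtual edges, let $\Sigma(K)$ be the set of distinct endpoint-pairs of its virtual edges, and let $A(K)$ be the set of vertices $v$ of $K$ such that $v$ is universal in $K$, $v$ is incident with a pair of parallel edges, and every virtual edge of $K$ is incident with $v$. If $K$ admits a half-edge $2$-colouring making it a W-cone in which every virtual edge is bichromatic, then the apex of every such W-cone colouring belongs to $A(K)$. Moreover: (1) if $|\Sigma(K)|\ge 2$, then $A(K)$ is a singleton; (2) if $\Sigma(K)=\{\{x,y\}\}$, then $A(K)\subseteq\{x,y\}$.
   Context: Graphs may have parallel edges but no loops. A vertex is universal if it is adjacent to all other vertices. A half-edge $2$-colouring $d$ assigns to each pair $(e,w)$ with $w$ an endpoint of edge $e$ a colour in $\{0,1\}$ (0 = blue, 1 = red). An edge $e=uv$ is bichromatic if $d(e,u)\neq d(e,v)$ and monochromatic otherwise; $E_b$, $E_m$ denote the bichromatic and monochromatic edge sets; standing convention: monochromatic edges are blue at both ends. A graph is matching-covered if every edge lies in some perfect matching. A W-cone is a half-edge $2$-coloured matching-covered graph $(K,d)$ containing a universal vertex $v$ (the apex) such that the set of edges incident with $v$ equals $E_b(K)$, $E(K-v)=E_m(K)$, and every vertex $u$ is incident with an edge $e$ with $d(e,u)=1$. *)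

From mathcomp Require Import all_boot.
Set Implicit Arguments. Unset Strict Implicit. Unset Printing Implicit Defensive.

(* A finite multigraph (parallel edges allowed): vertices V, edges E, each
   edge e has endpoints src e and tgt e.  Looplessness is a hypothesis
   ([loopless]) of the main theorem. *)
Section Graph.
Variables (V E : finType) (src tgt : E -> V).

Definition loopless : Prop := forall e, src e != tgt e.

Definition ends (e : E) : {set V} := [set src e; tgt e].

Definition incident (w : V) (e : E) : bool := w \in ends e.

Definition adjacent (u w : V) : Prop := exists e, ends e = [set u; w].

Definition universal (v : V) : Prop := forall u, u != v -> adjacent v u.

(* half-edge 2-colouring: d e w is the colour of the half-edge (e,w);
   only values at endpoints matter.  false = 0 = blue, true = 1 = red. *)
Definition colouring := E -> V -> bool.

Definition bichromatic (d : colouring) (e : E) : bool := d e (src e) != d e (tgt e).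
Definition monochromatic (d : colouring) (e : E) : bool := ~~ bichromatic d e.

Definition mono_blue (d : colouring) : Prop :=
  forall e, monochromatic d e -> d e (src e) = false /\ d e (tgt e) = false.

Definition perfect_matching (M : {set E}) : Prop :=
  forall w : V, #|[set e in M | incident w e]| = 1.

Definition matching_covered : Prop :=
  forall e : E, exists M : {set E}, perfect_matching M /\ e \in M.

Definition Wcone (d : colouring) (v : V) : Prop :=
  [/\ mono_blue d /\ matching_covered,
      universal v,
      (forall e, incident v e <-> bichromatic d e),
      (forall e, ~~ incident v e <-> monochromatic d e)
    & (forall u : V, exists e, incident u e /\ d e u = true)].

Definition Sigma (Virt : {set E}) : {set {set V}} := [set ends e | e in Virt].

Definition Aset (Virt : {set E}) : {set V} :=
  [set v | [&& [forall u, (u != v) ==> [exists e, ends e == [set v; u]]],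
              [exists e, exists f, [&& e != f, ends e == ends f & incident v e]]
            & [forall e in Virt, incident v e]]].

End Graph.

From mathcomp Require Import all_boot.

Set Implicit Arguments.
Unset Strict Implicit.
Unset Printing Implicit Defensive.

(* The apex v of a W-cone colouring is universal, and every virtual edge, being
   bichromatic, is incident with it.  For the parallel edges: v is red on some
   edge e, whose other end u is then blue on e; u is red on some edge f, which
   is not monochromatic (those are blue at both ends), hence is incident with
   v.  So e and f both join v and u, and differ since u has different colours
   on them.  Finally, two distinct vertices of A(K) are both incident with
   every virtual edge, which forces all of them to have the same ends. *)

Section Wcone_apex.
Variables (V E : finType) (src tgt : E -> V).

Local Notation ends := (ends src tgt).
Local Notation incident := (incident src tgt).
Local Notation bichromatic := (bichromatic src tgt).
Local Notation Aset := (Aset src tgt).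
Local Notation Sigma := (Sigma src tgt).

Lemma ends_set2 e v w : incident v e -> incident w e -> v != w ->
  ends e = [set v; w].
Proof.
by rewrite /incident /ends => /set2P [->|->] /set2P [->|->]; rewrite ?eqxx // setUC.
Qed.

Lemma bichromatic_other_end (d : colouring V E) e w :
  incident w e -> bichromatic d e ->
  exists u, [/\ u != w, incident u e & d e u = ~~ d e w].
Proof.
rewrite /incident /bichromatic /ends => /set2P [->|->] hb.
- exists (tgt e); split; rewrite ?set22 //; first by apply: contraNneq hb => ->.
  by move: hb; case: (d e (src e)); case: (d e (tgt e)).
- exists (src e); split; rewrite ?set21 //; first by apply: contraNneq hb => ->.
  by move: hb; case: (d e (src e)); case: (d e (tgt e)).
Qed.

Lemma mono_blue_red_bichromatic (d : colouring V E) e u :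
  mono_blue src tgt d -> incident u e -> d e u = true -> bichromatic d e.
Proof.
move=> hblue hu; apply: contraTT => /hblue [hs ht].
by move: hu; rewrite /incident /ends => /set2P [->|->]; rewrite ?hs ?ht.
Qed.

Lemma Wcone_parallel_at_apex (d : colouring V E) v : Wcone src tgt d v ->
  exists e f, [/\ e != f, ends e = ends f & incident v e].
Proof.
move=> [[hblue _] _ hinc _ hred].
have [e [hve dve]] := hred v.
have [u [huv hue due]] := bichromatic_other_end hve (proj1 (hinc e) hve).
rewrite dve /= in due.
have [f [huf duf]] := hred u.
have hvf : incident v f by apply/(hinc f)/(mono_blue_red_bichromatic hblue huf).
exists e, f; split=> //.
- by apply: contraTneq duf => <-; rewrite due.
- by rewrite (ends_set2 hve hue) 1?eq_sym // (ends_set2 hvf huf) 1?eq_sym.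
Qed.

Lemma Wcone_apex_in_Aset (Virt : {set E}) (d : colouring V E) v :
  Wcone src tgt d v -> (forall e, e \in Virt -> bichromatic d e) ->
  v \in Aset Virt.
Proof.
move=> hW hvirt; have [_ huniv hinc _ _] := hW.
rewrite inE; apply/and3P; split.
- apply/forallP=> u; apply/implyP=> huv.
  by have [e he] := huniv u huv; apply/existsP; exists e; apply/eqP.
- have [e [f [hef hends hve]]] := Wcone_parallel_at_apex hW.
  by apply/existsP; exists e; apply/existsP; exists f; rewrite hef hends eqxx.
- by apply/forallP => e; apply/implyP => /hvirt /(hinc e).
Qed.

Lemma Aset_incident (Virt : {set E}) w e :
  w \in Aset Virt -> e \in Virt -> incident w e.
Proof. by rewrite inE => /and3P [_ _ /forallP /(_ e) /implyP]. Qed.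

Lemma Aset_subset_Sigma (Virt : {set E}) S :
  S \in Sigma Virt -> Aset Virt \subset S.
Proof. by case/imsetP => e he ->; apply/subsetP => w /Aset_incident; apply. Qed.

Lemma card_Aset_le1 (Virt : {set E}) :
  2 <= #|Sigma Virt| -> #|Aset Virt| <= 1.
Proof.
move=> hSigma; apply/card_le1_eqP => w w' hw hw'.
apply: contraTeq hSigma => hww'; rewrite -leqNgt; apply/card_le1_eqP => _ _ /imsetP [e he ->] /imsetP [f hf ->].
by rewrite (ends_set2 (Aset_incident hw' he) (Aset_incident hw he) hww')
           (ends_set2 (Aset_incident hw' hf) (Aset_incident hw hf) hww').
Qed.

End Wcone_apex.

Theorem mainTheorem17 (V E : finType) (src tgt : E -> V) (Virt : {set E}) :
  loopless src tgt ->
  (exists (d : colouring V E) (v : V),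
      Wcone src tgt d v /\ (forall e, e \in Virt -> bichromatic src tgt d e)) ->
  [/\ (forall (d : colouring V E) (v : V),
         Wcone src tgt d v -> (forall e, e \in Virt -> bichromatic src tgt d e) ->
         v \in Aset src tgt Virt),
      (2 <= #|Sigma src tgt Virt| -> #|Aset src tgt Virt| = 1)
    & (forall x y : V, Sigma src tgt Virt = [set [set x; y]] ->
         Aset src tgt Virt \subset [set x; y])].
Proof.
move=> _ [d [v [hW hvirt]]]; split.
- exact: Wcone_apex_in_Aset.
- move=> hSigma; apply/eqP; rewrite eqn_leq card_Aset_le1 // card_gt0.
  by apply/set0Pn; exists v; exact: Wcone_apex_in_Aset hW hvirt.
- by move=> x y hSigma; apply: Aset_subset_Sigma; rewrite hSigma set11.
Qed.
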